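(* Let $\beta\ge0$ and $\rho\in(0,1]$. For every $N_1,N_2\in\mathbb N$ and every $\omega$, \[ \log\tilde{\mathcal Z}_{N_1+N_2,\omega}(\rho)\ \ge\ \log\tilde{\mathcal Z}_{N_1,\omega}(\rho)+\log\tilde{\mathcal Z}_{N_2,\theta^{N_1}\omega}(\rho), \] where $(\theta\omega)_n=\omega_{n+1}$ (with the convention $\log0=-\infty$).
   Context: Let $\tau=(\tau_j)_{j\ge0}$ be a renewal process with $\tau_0=0$ and i.i.d. increments with values in $\mathbb N$, law $\mathbf P$, expectation $\mathbf E$; $K(n)=\mathbf P(\tau_1=n)>0$ for all $n$, $K(n)\sim C_Kn^{-(1+\alpha)}$, $\alpha>0$, $C_K>0$. $\delta_n=\mathbf 1_{n\in\{\tau_0,\tau_1,\dots\}}$. Let $\omega=(\omega_n)_{n\ge1}$ be a real sequence (in the paper, i.i.d. with law $\mathbb P$, independent of $\tau$). For $N\in\mathbb N$, $m\in\{0,\dots,N\}$ let $\mathcal Z_{N,m,\omega,\beta}=\mathbf E[\exp(\beta\sum_{j=1}^N\omega_j\delta_j)\mathbf 1_{\tau_m=N}]$ (which is $0$ if $m=0$), and for $\rho\in(0,1]$ let $\tilde{\mathcal Z}_{N,\omega}(\rho):=\min_{m\in\{\lfloor\rho N\rfloor,\lceil\rho N\rceil\}}\mathcal Z_{N,m,\omega,\beta}$. *)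

From Stdlib Require Import Reals Lra Lia ZArith.
From Coquelicot Require Import Coquelicot.
Open Scope R_scope.

(* Standing assumptions on the inter-arrival law K of the renewal process:
   K n = P(tau_1 = n), with values in N = {1,2,...}: K 0 = 0, K n > 0 for
   n >= 1, sum_n K n = 1, and K n ~ C_K n^{-(1+alpha)}. *)
Definition renewal_kernel (K : nat -> R) (alpha CK : R) : Prop :=
  K 0%nat = 0 /\
  (forall n : nat, (1 <= n)%nat -> 0 < K n) /\
  is_series K 1 /\
  0 < alpha /\ 0 < CK /\
  is_lim_seq (fun n : nat => K n * Rpower (INR n) (1 + alpha)) CK.

Fixpoint sum1 (f : nat -> R) (n : nat) : R :=
  match n with
  | O => 0
  | S k => sum1 f k + f (S k)
  end.

(* W K beta omega m a N
     = E[ exp(beta * sum_{j=1}^{N-a} omega_{a+j} delta^{(a)}_{j}) 1_{tau_m = N - a} ]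
   for the renewal process started at a, i.e. the sum over all compositions
   (t_1,...,t_m) of N - a into m positive parts of
     prod_i K(t_i) * exp(beta * sum_i omega_{a + t_1 + ... + t_i}).
   This is the expectation unfolded by conditioning on the first jump. *)
Fixpoint W (K : nat -> R) (beta : R) (omega : nat -> R) (m a N : nat) : R :=
  match m with
  | O => if Nat.eqb a N then 1 else 0
  | S m' => sum1 (fun t => K t * exp (beta * omega (a + t)%nat)
                           * W K beta omega m' (a + t)%nat N) (N - a)
  end.

(* Z_{N,m,omega,beta} = E[exp(beta sum_{j=1}^N omega_j delta_j) 1_{tau_m = N}];
   omega is indexed from 1 (omega 0 is unused). *)
Definition Zpin (K : nat -> R) (beta : R) (N m : nat) (omega : nat -> R) : R :=
  W K beta omega m 0 N.

Definition nfloor (x : R) : nat := Z.to_nat (Int_part x).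
Definition nceil (x : R) : nat := Z.to_nat (- Int_part (- x)).

Definition Ztilde (K : nat -> R) (beta : R) (N : nat) (omega : nat -> R) (rho : R) : R :=
  Rmin (Zpin K beta N (nfloor (rho * INR N)) omega)
       (Zpin K beta N (nceil (rho * INR N)) omega).

Definition shift (k : nat) (omega : nat -> R) : nat -> R := fun n => omega (n + k)%nat.

Definition elog (x : R) : Rbar := if Rlt_dec 0 x then Finite (ln x) else m_infty.

(* Paths of the renewal process that reach N1 after m1 jumps and then N1 + N2
   after m2 more jumps are a subfamily of those reaching N1 + N2 after
   m1 + m2 jumps, and the weight of such a concatenated path factorises
   (renewal property), so Z_{N1+N2, m1+m2} >= Z_{N1, m1} Z_{N2, m2} with the
   second factor taken in the environment shifted by N1.  Every rounding
   (floor or ceiling) of rho (N1 + N2) is the sum of a rounding of rho N1 and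
   one of rho N2, so the minima over roundings are supermultiplicative too,
   and taking logarithms gives the claim. *)
From Stdlib Require Import Reals Lra Lia ZArith.
From Coquelicot Require Import Coquelicot.
Open Scope R_scope.

Lemma sum1_ext f g n : (forall t, f t = g t) -> sum1 f n = sum1 g n.
Proof. intros H; induction n; simpl; auto. rewrite IHn, H; auto. Qed.

Lemma sum1_nonneg f n : (forall t, 0 <= f t) -> 0 <= sum1 f n.
Proof. intros H; induction n; simpl. lra. specialize (H (S n)); lra. Qed.

Lemma sum1_le f g n : (forall t, f t <= g t) -> sum1 f n <= sum1 g n.
Proof. intros H; induction n; simpl. lra. specialize (H (S n)); lra. Qed.

Lemma sum1_mono_len f n p : (forall t, 0 <= f t) -> (n <= p)%nat -> sum1 f n <= sum1 f p.
Proof. intros H Hp; induction Hp. lra. simpl. specialize (H (S m)); lra. Qed.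

Lemma sum1_mult_r f n c : sum1 f n * c = sum1 (fun t => f t * c) n.
Proof. induction n; simpl. ring. rewrite <- IHn; ring. Qed.

Section Pinned_weights.

Variables (K : nat -> R) (beta : R).
Hypothesis K_nonneg : forall n, 0 <= K n.

Lemma jump_weight_nonneg omega a t : 0 <= K t * exp (beta * omega (a + t)%nat).
Proof. apply Rmult_le_pos; [apply K_nonneg | left; apply exp_pos]. Qed.

Lemma W_nonneg omega m : forall a N, 0 <= W K beta omega m a N.
Proof.
  induction m as [|m IH]; intros a N; simpl.
  - destruct (Nat.eqb a N); lra.
  - apply sum1_nonneg; intro t.
    apply Rmult_le_pos; [apply jump_weight_nonneg | apply IH].
Qed.

Lemma W_past_end omega m a N : (N < a)%nat -> W K beta omega m a N = 0.
Proof.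
  intros H; destruct m; simpl.
  - destruct (Nat.eqb_spec a N); [lia | auto].
  - replace (N - a)%nat with 0%nat by lia. reflexivity.
Qed.

Lemma W_concat omega m1 m2 : forall a M N,
  W K beta omega m1 a M * W K beta omega m2 M N <= W K beta omega (m1 + m2) a N.
Proof.
  induction m1 as [|m1 IH]; intros a M N.
  - simpl. destruct (Nat.eqb_spec a M) as [->|_].
    + lra.
    + rewrite Rmult_0_l. apply W_nonneg.
  - destruct (Nat.lt_ge_cases N M) as [HMN|HMN].
    { rewrite (W_past_end omega m2 M N HMN), Rmult_0_r. apply W_nonneg. }
    simpl. rewrite sum1_mult_r.
    apply Rle_trans with (sum1 (fun t => K t * exp (beta * omega (a + t)%nat) *
       W K beta omega m1 (a + t)%nat M * W K beta omega m2 M N) (N - a)).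
    + apply sum1_mono_len; [|lia]. intro t.
      apply Rmult_le_pos; [apply Rmult_le_pos|];
        auto using jump_weight_nonneg, W_nonneg.
    + apply sum1_le; intro t. rewrite Rmult_assoc.
      apply Rmult_le_compat_l; [apply jump_weight_nonneg | apply IH].
Qed.

Lemma W_shift omega m : forall a N k,
  W K beta (shift k omega) m a N = W K beta omega m (a + k) (N + k).
Proof.
  induction m as [|m IH]; intros a N k; simpl.
  - destruct (Nat.eqb_spec a N), (Nat.eqb_spec (a + k) (N + k)); auto; lia.
  - replace (N + k - (a + k))%nat with (N - a)%nat by lia.
    apply sum1_ext; intro t. rewrite IH. unfold shift.
    replace (a + t + k)%nat with (a + k + t)%nat by lia. reflexivity.
Qed.

Lemma Zpin_supermul omega N1 N2 m1 m2 :
  Zpin K beta N1 m1 omega * Zpin K beta N2 m2 (shift N1 omega)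
  <= Zpin K beta (N1 + N2) (m1 + m2) omega.
Proof.
  unfold Zpin. rewrite W_shift, Nat.add_0_l, Nat.add_comm.
  apply W_concat.
Qed.

End Pinned_weights.

Lemma nfloor_spec x : 0 <= x -> INR (nfloor x) <= x < INR (nfloor x) + 1.
Proof.
  intros Hx. unfold nfloor. destruct (base_Int_part x) as [H1 H2].
  assert (H : (-1 < Int_part x)%Z) by (apply lt_IZR; lra).
  rewrite INR_IZR_INZ, Z2Nat.id by lia. lra.
Qed.

Lemma nceil_spec x : 0 <= x -> INR (nceil x) - 1 < x <= INR (nceil x).
Proof.
  intros Hx. unfold nceil. destruct (base_Int_part (- x)) as [H1 H2].
  assert (H : (Int_part (- x) < 1)%Z) by (apply lt_IZR; lra).
  rewrite INR_IZR_INZ, Z2Nat.id, opp_IZR by lia. lra.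
Qed.

Lemma le_of_INR_lt_succ n p : INR n < INR p + 1 -> (n <= p)%nat.
Proof. rewrite <- S_INR. intros H. apply INR_lt in H. lia. Qed.

Definition is_rounding (x : R) (m : nat) : Prop := m = nfloor x \/ m = nceil x.

Lemma is_rounding_add x1 x2 m : 0 <= x1 -> 0 <= x2 -> is_rounding (x1 + x2) m ->
  exists m1 m2, is_rounding x1 m1 /\ is_rounding x2 m2 /\ m = (m1 + m2)%nat.
Proof.
  intros H1 H2 Hm. unfold is_rounding in *.
  pose proof (nfloor_spec x1 H1). pose proof (nceil_spec x1 H1).
  pose proof (nfloor_spec x2 H2). pose proof (nceil_spec x2 H2).
  assert (H12 : 0 <= x1 + x2) by lra.
  pose proof (nfloor_spec _ H12). pose proof (nceil_spec _ H12).
  set (F1 := nfloor x1) in *. set (C1 := nceil x1) in *.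
  set (F2 := nfloor x2) in *. set (C2 := nceil x2) in *.
  set (F := nfloor (x1 + x2)) in *. set (C := nceil (x1 + x2)) in *.
  assert (F1 + F2 <= F)%nat by (apply le_of_INR_lt_succ; rewrite plus_INR; lra).
  assert (C <= C1 + C2)%nat by (apply le_of_INR_lt_succ; rewrite plus_INR; lra).
  assert (F <= C)%nat by (apply le_of_INR_lt_succ; lra).
  assert (C1 <= S F1)%nat by (apply le_of_INR_lt_succ; rewrite S_INR; lra).
  assert (C2 <= S F2)%nat by (apply le_of_INR_lt_succ; rewrite S_INR; lra).
  assert (HmFC : (F1 + F2 <= m <= C1 + C2)%nat) by (destruct Hm; subst m; lia).
  clearbody F1 C1 F2 C2 F C.
  (* m lies in [F1 + F2, C1 + C2] and each Ci exceeds Fi by at most one *)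
  destruct (Nat.eq_dec m (F1 + F2)) as [->|Hne].
  { exists F1, F2; auto. }
  destruct (Nat.le_gt_cases m (F1 + C2)).
  - exists F1, C2; repeat split; auto; lia.
  - exists C1, C2; repeat split; auto; lia.
Qed.

Lemma Ztilde_le_Zpin K beta N omega rho m : is_rounding (rho * INR N) m ->
  Ztilde K beta N omega rho <= Zpin K beta N m omega.
Proof. intros [-> | ->]; [apply Rmin_l | apply Rmin_r]. Qed.

Lemma Ztilde_nonneg K beta N omega rho : (forall n, 0 <= K n) ->
  0 <= Ztilde K beta N omega rho.
Proof. intros HK. apply Rmin_glb; apply W_nonneg, HK. Qed.

Lemma Ztilde_supermul K beta omega rho N1 N2 : (forall n, 0 <= K n) -> 0 <= rho ->
  Ztilde K beta N1 omega rho * Ztilde K beta N2 (shift N1 omega) rho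
  <= Ztilde K beta (N1 + N2) omega rho.
Proof.
  intros HK Hrho.
  assert (Hsplit : rho * INR (N1 + N2) = rho * INR N1 + rho * INR N2)
    by (rewrite plus_INR; ring).
  assert (HN : forall N, 0 <= rho * INR N)
    by (intro; apply Rmult_le_pos; [lra | apply pos_INR]).
  assert (Hbound : forall m, is_rounding (rho * INR (N1 + N2)) m ->
    Ztilde K beta N1 omega rho * Ztilde K beta N2 (shift N1 omega) rho
    <= Zpin K beta (N1 + N2) m omega).
  { intros m Hm. rewrite Hsplit in Hm.
    destruct (is_rounding_add _ _ m (HN N1) (HN N2) Hm) as [m1 [m2 [Hm1 [Hm2 ->]]]].
    eapply Rle_trans; [| apply Zpin_supermul, HK].
    apply Rmult_le_compat; auto using Ztilde_nonneg, Ztilde_le_Zpin. }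
  apply Rmin_glb; apply Hbound; [left | right]; reflexivity.
Qed.

Lemma elog_mul_le x y z : 0 <= x -> 0 <= y -> x * y <= z ->
  Rbar_le (Rbar_plus (elog x) (elog y)) (elog z).
Proof.
  intros Hx Hy Hxyz. unfold elog.
  destruct (Rlt_dec 0 x) as [px|px]; destruct (Rlt_dec 0 y) as [py|py];
    simpl; auto.
  assert (Hxy : 0 < x * y) by (apply Rmult_lt_0_compat; assumption).
  destruct (Rlt_dec 0 z) as [_|Hz]; [|lra].
  rewrite <- ln_mult by assumption.
  apply ln_le; assumption.
Qed.

Theorem lemma6p1 (K : nat -> R) (alpha CK : R) (beta rho : R)
  (hK : renewal_kernel K alpha CK)
  (hbeta : 0 <= beta) (hrho0 : 0 < rho) (hrho1 : rho <= 1)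
  (N1 N2 : nat) (hN1 : (1 <= N1)%nat) (hN2 : (1 <= N2)%nat)
  (omega : nat -> R) :
  Rbar_le
    (Rbar_plus (elog (Ztilde K beta N1 omega rho))
               (elog (Ztilde K beta N2 (shift N1 omega) rho)))
    (elog (Ztilde K beta (N1 + N2) omega rho)).
Proof.
  assert (K_nonneg : forall n, 0 <= K n).
  { destruct hK as [K0 [Kpos _]]. intros [|n]; [lra | left; apply Kpos; lia]. }
  apply elog_mul_le.
  - apply Ztilde_nonneg, K_nonneg.
  - apply Ztilde_nonneg, K_nonneg.
  - apply Ztilde_supermul; [exact K_nonneg | lra].
Qed.
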